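(* Let $K=\{k_0,k_1,\dots,k_n\}$ be a finite set of alternatives, $K_*=K\setminus\{k_0\}$, $T_1,T_2$ finite type sets with $\min\{|T_1|,|T_2|\}=2$, $T=T_1\times T_2$, and $\lambda$ a probability measure on $T$ with $\lambda(t)>0$ for all $t$, equal to the product of its marginals $\lambda_1,\lambda_2$. If an interim allocation rule $Q=(Q_1,Q_2)$, $Q_i:K\times T_i\to\mathbb{R}$, is implementable, then for all $G\subseteq K_*$, $E_1\subseteq T_1$ and $E_2\subseteq T_2$, $$\sum_{k\in G}\Big[\sum_{t_1\in E_1}Q_1^k(t_1)\lambda_1(t_1)-\sum_{t_2\in E_2}Q_2^k(t_2)\lambda_2(t_2)\Big]\le \lambda\big(E_1\times (T_2\setminus E_2)\big).$$
   Context: An ex post allocation rule $q:K\times T\to\mathbb{R}$ is feasible if $q\ge 0$ and $\sum_{k\in K}q^k(t)=1$ for all $t\in T$. An interim allocation rule $Q$ is implementable if there exists a feasible $q$ with $Q_i^k(t_i)=\sum_{t_{-i}\in T_{-i}}q^k(t)\lambda_{-i}(t_{-i})$ for all $i\in\{1,2\}$, $t_i\in T_i$, $k\in K$, where $-i$ denotes the other player. For $E\subseteq T$, $\lambda(E)=\sum_{t\in E}\lambda(t)$. *)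

From HB Require Import structures.
From mathcomp Require Import all_boot all_order all_algebra.
Set Implicit Arguments. Unset Strict Implicit. Unset Printing Implicit Defensive.
Import Order.TTheory GRing.Theory Num.Theory.
Local Open Scope ring_scope.

Definition marg1 (R : numDomainType) (T1 T2 : finType) (lam : T1 * T2 -> R)
  (t1 : T1) : R := \sum_(t2 : T2) lam (t1, t2).
Definition marg2 (R : numDomainType) (T1 T2 : finType) (lam : T1 * T2 -> R)
  (t2 : T2) : R := \sum_(t1 : T1) lam (t1, t2).

Definition measT (R : numDomainType) (T1 T2 : finType) (lam : T1 * T2 -> R)
  (E : {set T1 * T2}) : R := \sum_(t in E) lam t.

Definition feasible (R : numDomainType) (K T1 T2 : finType)
  (q : K -> T1 * T2 -> R) : Prop :=
  (forall k t, 0 <= q k t) /\ (forall t, \sum_(k : K) q k t = 1).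

Definition implementable (R : numDomainType) (K T1 T2 : finType)
  (lam : T1 * T2 -> R) (Q1 : K -> T1 -> R) (Q2 : K -> T2 -> R) : Prop :=
  exists q : K -> T1 * T2 -> R, feasible q /\
    (forall k t1, Q1 k t1 = \sum_(t2 : T2) q k (t1, t2) * marg2 lam t2) /\
    (forall k t2, Q2 k t2 = \sum_(t1 : T1) q k (t1, t2) * marg1 lam t1).

From HB Require Import structures.
From mathcomp Require Import all_boot all_order all_algebra.
From mathcomp Require Import lra.
Set Implicit Arguments. Unset Strict Implicit. Unset Printing Implicit Defensive.
Import Order.TTheory GRing.Theory Num.Theory.
Local Open Scope ring_scope.

(* Under a product prior both interim expectations are integrals of the same
   ex post rule: the left-hand side equals the sum over t of
   (1[t1 in E1] - 1[t2 in E2]) q_G(t) lambda(t), where q_G(t) is the total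
   probability of the alternatives in G at t.  Since 0 <= q_G <= 1, each term
   is at most lambda(t) when t1 in E1 and t2 notin E2, and at most 0
   otherwise. *)

Section ProductPrior.

Variables (R : numDomainType) (T1 T2 : finType) (lam : T1 * T2 -> R).
Hypothesis lam_prod : forall t1 t2, lam (t1, t2) = marg1 lam t1 * marg2 lam t2.

Lemma sum_interim1 (q : T1 * T2 -> R) (E1 : {set T1}) :
  \sum_(t1 in E1) (\sum_t2 q (t1, t2) * marg2 lam t2) * marg1 lam t1
  = \sum_t (t.1 \in E1)%:R * q t * lam t.
Proof.
transitivity (\sum_t1 \sum_t2 (t1 \in E1)%:R * q (t1, t2) * lam (t1, t2)).
  rewrite big_mkcond; apply: eq_bigr => t1 _.
  case: (t1 \in E1); last by rewrite big1 // => t2 _; rewrite !mul0r.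
  rewrite mulr_suml; apply: eq_bigr => t2 _.
  by rewrite lam_prod mul1r mulrA mulrAC.
by rewrite pair_bigA; apply: eq_bigr => -[].
Qed.

Lemma sum_interim2 (q : T1 * T2 -> R) (E2 : {set T2}) :
  \sum_(t2 in E2) (\sum_t1 q (t1, t2) * marg1 lam t1) * marg2 lam t2
  = \sum_t (t.2 \in E2)%:R * q t * lam t.
Proof.
transitivity (\sum_t2 \sum_t1 (t2 \in E2)%:R * q (t1, t2) * lam (t1, t2)).
  rewrite big_mkcond; apply: eq_bigr => t2 _.
  case: (t2 \in E2); last by rewrite big1 // => t1 _; rewrite !mul0r.
  rewrite mulr_suml; apply: eq_bigr => t1 _.
  by rewrite lam_prod mul1r mulrA.
by rewrite exchange_big pair_bigA; apply: eq_bigr => -[].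
Qed.

End ProductPrior.

Lemma feasible_sum_itv (R : numDomainType) (K T1 T2 : finType)
    (q : K -> T1 * T2 -> R) (G : {set K}) (t : T1 * T2) :
  feasible q -> 0 <= \sum_(k in G) q k t <= 1.
Proof.
case=> q_ge0 q_sum1; rewrite sumr_ge0 //=.
by rewrite -(q_sum1 t) [leRHS](bigID (mem G)) /= lerDl sumr_ge0.
Qed.

Lemma indicator_diff_le (R : realDomainType) (a b : bool) (x l : R) :
  0 <= x <= 1 -> 0 <= l -> (a%:R - b%:R) * x * l <= (if a && ~~ b then l else 0).
Proof. by case/andP=> x_ge0 x_le1 l_ge0; case: a; case: b => /=; nra. Qed.

Theorem lemma2 (R : realFieldType) (K T1 T2 : finType) (k0 : K)
  (lam : T1 * T2 -> R)
  (hT : minn #|T1| #|T2| = 2%N)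
  (hpos : forall t, 0 < lam t)
  (hprob : \sum_(t : T1 * T2) lam t = 1)
  (hprod : forall t1 t2, lam (t1, t2) = marg1 lam t1 * marg2 lam t2)
  (Q1 : K -> T1 -> R) (Q2 : K -> T2 -> R)
  (hQ : implementable lam Q1 Q2) :
  forall (G : {set K}) (E1 : {set T1}) (E2 : {set T2}),
    G \subset [set~ k0] ->
    \sum_(k in G)
       (\sum_(t1 in E1) Q1 k t1 * marg1 lam t1
        - \sum_(t2 in E2) Q2 k t2 * marg2 lam t2)
    <= measT lam (setX E1 (~: E2)).
Proof.
move=> G E1 E2 _; case: hQ => q [q_feas [hQ1 hQ2]].
have ex_post_diff k : \sum_(t1 in E1) Q1 k t1 * marg1 lam t1
    - \sum_(t2 in E2) Q2 k t2 * marg2 lam t2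
    = \sum_t ((t.1 \in E1)%:R - (t.2 \in E2)%:R) * q k t * lam t.
  under eq_bigr do rewrite hQ1.
  under [X in _ - X]eq_bigr do rewrite hQ2.
  rewrite sum_interim1 // sum_interim2 // -sumrB.
  by apply: eq_bigr => t _; rewrite -!mulrBl.
under eq_bigr do rewrite ex_post_diff.
rewrite exchange_big /measT [leRHS]big_mkcond /=.
apply: ler_sum => -[t1 t2] _ /=.
rewrite -mulr_suml -mulr_sumr in_setX in_setC.
by apply: indicator_diff_le; [exact: feasible_sum_itv | exact: ltW].
Qed.
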